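(* Let $(\mathbf A,G,H)$ be a tense Pavelka algebra whose underlying Pavelka algebra $\mathbf A$ is semisimple. The following are equivalent: (i) $G(x)\cdot G(y)\le G(x\cdot y)$ for all $x,y\in A$; (ii) $H(x)\cdot H(y)\le H(x\cdot y)$ for all $x,y\in A$; (iii) the natural time frame of $(\mathbf A,G,H)$ is boolean, i.e. $R(F,F')=\bigwedge_{a\in A}(G(a)/F'\rightarrow a/F)\in\{0,1\}$ for all $F,F'\in\mathrm{Spec_M}\mathbf A$; (iv) $G$ and $H$ are tense operators on the MV-reduct $(A;\oplus,\neg,\mathbf 0)$ in the sense of tense MV-algebras, i.e. for all $x,y\in A$: (T1) $G(1)=H(1)=1$; (T2) $G(x)\cdot G(y)\le G(x\cdot y)$, $H(x)\cdot H(y)\le H(x\cdot y)$; (T3) $G(x)\oplus G(y)\le G(x\oplus y)$, $H(x)\oplus H(y)\le H(x\oplus y)$; (T4) $G(x)\cdot G(x)=G(x\cdot x)$, $H(x)\cdot H(x)=H(x\cdot x)$; (T5) $G(x)\oplus G(x)=G(x\oplus x)$, $H(x)\oplus H(x)=H(x\oplus x)$; (T6) $\neg G(\neg H(x))\le x$, $\neg H(\neg G(x))\le x$.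
   Context: An MV-algebra $(A;\oplus,\neg,0)$ carries derived operations $1=\neg0$, $x\cdot y=\neg(\neg x\oplus\neg y)$, $x\rightarrow y=\neg x\oplus y$, $x\vee y=\neg(\neg x\oplus y)\oplus y$, $x\wedge y=\neg(\neg x\vee\neg y)$, order $x\le y$ iff $\neg x\oplus y=1$. The standard MV-algebra is $[0,1]$ with $x\oplus y=\min\{x+y,1\}$, $\neg x=1-x$. A Pavelka algebra is $\mathbf A=(A;\oplus,\neg,\{\mathbf r\mid r\in[0,1]\cap\mathbb Q\})$ with $(A;\oplus,\neg,\mathbf 0)$ an MV-algebra, $\mathbf r\oplus\mathbf s=\mathbf t$ whenever $\min\{r+s,1\}=t$, $\neg\mathbf r=\mathbf s$ whenever $1-r=s$. Filters are filters of the MV-reduct; $\mathrm{Spec_M}\mathbf A$ is the set of maximal proper filters; for $F\in\mathrm{Spec_M}\mathbf A$, $\mathbf A/F$ embeds uniquely into $[0,1]$ and $x/F$ is identified with its image in $[0,1]$. Semisimple: MV-reduct is a subdirect product of simple MV-algebras. A tense Pavelka algebra is $(\mathbf A,G,H)$ with $G,H\colon A\to A$ such that for all $x,y$ and constants $\mathbf r$: (PT1) $G(x\wedge y)=G(x)\wedge G(y)$, $H(x\wedge y)=H(x)\wedge H(y)$; (PT2) $\mathbf r\rightarrow G(x)=G(\mathbf r\rightarrow x)$, $\mathbf r\rightarrow H(x)=H(\mathbf r\rightarrow x)$; (PT3) $\neg H(\neg G(x))\le x$, $\neg G(\neg H(x))\le x$. *)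

From Stdlib Require Import Reals QArith Qminmax.
Open Scope R_scope.

Record MVAlg := {
  car :> Type;
  mv_oplus : car -> car -> car;
  mv_neg : car -> car;
  mv_zero : car;
  mv_assoc : forall x y z, mv_oplus x (mv_oplus y z) = mv_oplus (mv_oplus x y) z;
  mv_comm : forall x y, mv_oplus x y = mv_oplus y x;
  mv_zero_r : forall x, mv_oplus x mv_zero = x;
  mv_negK : forall x, mv_neg (mv_neg x) = x;
  mv_one_abs : forall x, mv_oplus x (mv_neg mv_zero) = mv_neg mv_zero;
  mv_luk : forall x y, mv_oplus (mv_neg (mv_oplus (mv_neg x) y)) y
                     = mv_oplus (mv_neg (mv_oplus (mv_neg y) x)) x
}.

Arguments mv_oplus {m}. Arguments mv_neg {m}. Arguments mv_zero {m}.

Section Derived.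
Variable A : MVAlg.
Definition mv_one : A := mv_neg mv_zero.
Definition mv_mul (x y : A) : A := mv_neg (mv_oplus (mv_neg x) (mv_neg y)).
Definition mv_imp (x y : A) : A := mv_oplus (mv_neg x) y.
Definition mv_join (x y : A) : A := mv_oplus (mv_neg (mv_oplus (mv_neg x) y)) y.
Definition mv_meet (x y : A) : A := mv_neg (mv_join (mv_neg x) (mv_neg y)).
Definition mv_le (x y : A) : Prop := mv_oplus (mv_neg x) y = mv_one.

Definition is_filter (F : A -> Prop) : Prop :=
  F mv_one /\
  (forall x y, F x -> F y -> F (mv_mul x y)) /\
  (forall x y, F x -> mv_le x y -> F y).
Definition proper_filter (F : A -> Prop) : Prop := is_filter F /\ ~ F mv_zero.
Definition maximal_filter (F : A -> Prop) : Prop :=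
  proper_filter F /\
  forall F', proper_filter F' -> (forall x, F x -> F' x) -> forall x, F' x -> F x.

Definition filter_cong (F : A -> Prop) (x y : A) : Prop :=
  F (mv_imp x y) /\ F (mv_imp y x).
End Derived.

Arguments mv_one {A}. Arguments mv_mul {A}. Arguments mv_imp {A}.
Arguments mv_join {A}. Arguments mv_meet {A}. Arguments mv_le {A}.

Definition mv_simple (S : MVAlg) : Prop :=
  (mv_zero : S) <> mv_one /\
  forall F : S -> Prop, is_filter S F ->
    (forall x, F x -> x = mv_one) \/ (forall x, F x).

Definition mv_hom (A B : MVAlg) (f : A -> B) : Prop :=
  (forall x y, f (mv_oplus x y) = mv_oplus (f x) (f y)) /\
  (forall x, f (mv_neg x) = mv_neg (f x)) /\
  f mv_zero = mv_zero.

Definition mv_semisimple (A : MVAlg) : Prop :=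
  exists (I : Type) (S : I -> MVAlg) (e : A -> forall i, S i),
    (forall i, mv_simple (S i)) /\
    (forall i, mv_hom A (S i) (fun x => e x i)) /\
    (forall x y, e x = e y -> x = y) /\
    (forall i (s : S i), exists x, e x i = s).

Definition std_oplus (a b : R) : R := Rmin (a + b) 1.
Definition std_neg (a : R) : R := 1 - a.
Definition std_imp (a b : R) : R := Rmin 1 (1 - a + b).

(** [h] is the composite A -> A/F -> [0,1] of the canonical projection with an
    embedding of A/F into the standard MV-algebra: an MV-homomorphism into [0,1]
    whose kernel congruence is exactly the congruence of F.  Thus h x is x/F. *)
Definition quotient_embedding (A : MVAlg) (F : A -> Prop) (h : A -> R) : Prop :=
  (forall x, 0 <= h x <= 1) /\
  (forall x y, h (mv_oplus x y) = std_oplus (h x) (h y)) /\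
  (forall x, h (mv_neg x) = std_neg (h x)) /\
  h mv_zero = 0 /\
  (forall x y, h x = h y <-> filter_cong A F x y).

Definition inQ01 (r : Q) : Prop := (0 <= r)%Q /\ (r <= 1)%Q.
Definition is_pavelka (A : MVAlg) (c : Q -> A) : Prop :=
  c 0%Q = mv_zero /\
  (forall r s t, inQ01 r -> inQ01 s -> inQ01 t ->
     Qeq (Qminmax.Qmin (r + s) 1) t -> mv_oplus (c r) (c s) = c t) /\
  (forall r s, inQ01 r -> inQ01 s -> Qeq (1 - r) s -> mv_neg (c r) = c s).

Definition is_tense_pavelka (A : MVAlg) (c : Q -> A) (G H : A -> A) : Prop :=
  is_pavelka A c /\
  (forall x y, G (mv_meet x y) = mv_meet (G x) (G y)) /\
  (forall x y, H (mv_meet x y) = mv_meet (H x) (H y)) /\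
  (forall r x, inQ01 r -> mv_imp (c r) (G x) = G (mv_imp (c r) x)) /\
  (forall r x, inQ01 r -> mv_imp (c r) (H x) = H (mv_imp (c r) x)) /\
  (forall x, mv_le (mv_neg (H (mv_neg (G x)))) x) /\
  (forall x, mv_le (mv_neg (G (mv_neg (H x)))) x).

Definition is_inf (S : R -> Prop) (m : R) : Prop :=
  (forall y, S y -> m <= y) /\ (forall m', (forall y, S y -> m' <= y) -> m' <= m).

Definition natural_frame_boolean (A : MVAlg) (G : A -> A) : Prop :=
  forall (F F' : A -> Prop) (hF hF' : A -> R),
    maximal_filter A F -> maximal_filter A F' ->
    quotient_embedding A F hF -> quotient_embedding A F' hF' ->
    forall m, is_inf (fun v => exists a : A, v = std_imp (hF' (G a)) (hF a)) m ->
      m = 0 \/ m = 1.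

Definition is_tense_mv (A : MVAlg) (G H : A -> A) : Prop :=
  (G mv_one = mv_one /\ H mv_one = mv_one) /\
  (forall x y, mv_le (mv_mul (G x) (G y)) (G (mv_mul x y)) /\
               mv_le (mv_mul (H x) (H y)) (H (mv_mul x y))) /\
  (forall x y, mv_le (mv_oplus (G x) (G y)) (G (mv_oplus x y)) /\
               mv_le (mv_oplus (H x) (H y)) (H (mv_oplus x y))) /\
  (forall x, mv_mul (G x) (G x) = G (mv_mul x x) /\ mv_mul (H x) (H x) = H (mv_mul x x)) /\
  (forall x, mv_oplus (G x) (G x) = G (mv_oplus x x) /\ mv_oplus (H x) (H x) = H (mv_oplus x x)) /\
  (forall x, mv_le (mv_neg (G (mv_neg (H x)))) x /\ mv_le (mv_neg (H (mv_neg (G x)))) x).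

(* Evaluating at maximal filters: [x/F = sup {r | r → x ∈ F}] is an MV-homomorphism into
   [[0,1]] fixing the constants, and by semisimplicity these evaluations separate [A].
   (i) ⇒ (iii): if [0 < R(F,F') < 1], take [a] with [G(a)/F' - a/F] close to [1 - R(F,F')],
   shift it by a rational constant and square it; as [G] is submultiplicative and commutes
   with [r → _], the gap doubles and the infimum drops below [R(F,F')].  (ii) ⇒ (iii) is the
   same argument for [H], because by (PT3) the frame of [G] from [F] to [F'] has the same
   value as the frame of [H] from [F'] to [F].
   (iii) ⇒ (iv): with a boolean frame, for every maximal [F'] and every [x] Zorn's lemma gives
   a maximal [M] with [G(a)/F' ≤ a/M] for all [a] and [x/M] as close to [G(x)/F'] as wanted;
   comparing both sides of (T2)-(T5) at [F'] and at [M] gives the inequalities at every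
   maximal filter, and separation lifts them to [A].  [H] inherits a boolean frame by the
   same symmetry, and (iv) ⇒ (i), (ii) is immediate. *)

From Stdlib Require Import Reals QArith.
From Stdlib Require Import Qminmax Qreals Lqa Lra Lia ZArith Classical FunctionalExtensionality.
From mathcomp Require classical_sets boolp.

Ltac lra_Q := Stdlib.micromega.Lqa.lra.
Ltac lra_R := Stdlib.micromega.Lra.lra.
Ltac lra_minmax := unfold Rmin, Rmax in *; repeat destruct Rle_dec; lra_R.

Local Notation "x ⊕ y" := (mv_oplus x y) (at level 50, left associativity).
Local Notation "x ⊙ y" := (mv_mul x y) (at level 40, left associativity).
Local Notation "¬ x" := (mv_neg x) (at level 35, right associativity).
Local Notation "x ≤ y" := (mv_le x y) (at level 70).

Section MVArithmetic.
Context {A : MVAlg}.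
Implicit Types x y z w : A.

Lemma oplusA x y z : x ⊕ (y ⊕ z) = x ⊕ y ⊕ z. Proof. apply mv_assoc. Qed.
Lemma oplusC x y : x ⊕ y = y ⊕ x. Proof. apply mv_comm. Qed.
Lemma oplus0 x : x ⊕ mv_zero = x. Proof. apply mv_zero_r. Qed.
Lemma oplus1 x : x ⊕ mv_one = mv_one. Proof. apply mv_one_abs. Qed.
Lemma negK x : ¬ ¬ x = x. Proof. apply mv_negK. Qed.
Lemma oplus0l x : mv_zero ⊕ x = x. Proof. rewrite oplusC; apply oplus0. Qed.
Lemma oplus1l x : mv_one ⊕ x = mv_one. Proof. rewrite oplusC; apply oplus1. Qed.
Lemma oplusCA x y z : x ⊕ (y ⊕ z) = y ⊕ (x ⊕ z).
Proof. rewrite !oplusA, (oplusC x y); reflexivity. Qed.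
Lemma neg_one : ¬ (mv_one : A) = mv_zero. Proof. apply negK. Qed.
Lemma neg_inj x y : ¬ x = ¬ y -> x = y.
Proof. intro E. rewrite <- (negK x), E. apply negK. Qed.

Lemma oplusNx x : ¬ x ⊕ x = mv_one.
Proof.
  pose proof (mv_luk A x mv_one) as E. fold (@mv_one A) in E.
  rewrite !oplus1, neg_one, oplus0l in E. symmetry; exact E.
Qed.
Lemma oplusxN x : x ⊕ ¬ x = mv_one. Proof. rewrite oplusC; apply oplusNx. Qed.

Lemma mv_le_refl x : x ≤ x. Proof. apply oplusNx. Qed.
Lemma mv_le1 x : x ≤ mv_one. Proof. apply oplus1. Qed.
Lemma mv_ge1_eq x : mv_one ≤ x -> x = mv_one.
Proof. unfold mv_le; rewrite neg_one, oplus0l; auto. Qed.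
Lemma mv_le_oplusr x w : x ≤ x ⊕ w.
Proof. unfold mv_le. rewrite oplusA, oplusNx. apply oplus1l. Qed.
Lemma mv_le_oplusl x w : x ≤ w ⊕ x.
Proof. rewrite oplusC; apply mv_le_oplusr. Qed.

Lemma mv_joinC x y : mv_join x y = mv_join y x. Proof. apply mv_luk. Qed.
Lemma mv_join_le x y : x ≤ y -> mv_join x y = y.
Proof. unfold mv_le, mv_join; intro E; rewrite E, neg_one, oplus0l; auto. Qed.
Lemma mv_le_joinl x y : x ≤ mv_join x y.
Proof. rewrite mv_joinC. apply mv_le_oplusl. Qed.

Lemma mv_le_oplus_eq x y : x ≤ y -> y = x ⊕ ¬ (¬ y ⊕ x).
Proof. intro E. rewrite <- (mv_join_le _ _ E) at 1. rewrite mv_joinC. apply oplusC. Qed.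

Lemma mv_le_antisym x y : x ≤ y -> y ≤ x -> x = y.
Proof.
  intros Hxy Hyx. rewrite <- (mv_join_le _ _ Hxy), mv_joinC. symmetry. apply mv_join_le; auto.
Qed.
Lemma mv_le_trans x y z : x ≤ y -> y ≤ z -> x ≤ z.
Proof.
  intros Hxy Hyz. rewrite (mv_le_oplus_eq _ _ Hyz), (mv_le_oplus_eq _ _ Hxy), <- oplusA.
  apply mv_le_oplusr.
Qed.
Lemma oplus_le_compat_l x y z : y ≤ z -> x ⊕ y ≤ x ⊕ z.
Proof. intro E. rewrite (mv_le_oplus_eq _ _ E), oplusA. apply mv_le_oplusr. Qed.
Lemma oplus_le_compat x y z w : x ≤ y -> z ≤ w -> x ⊕ z ≤ y ⊕ w.
Proof.
  intros Hxy Hzw. apply mv_le_trans with (x ⊕ w); [now apply oplus_le_compat_l|].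
  rewrite (oplusC x), (oplusC y). now apply oplus_le_compat_l.
Qed.
Lemma neg_le_compat x y : x ≤ y -> ¬ y ≤ ¬ x.
Proof. unfold mv_le; rewrite negK, oplusC; auto. Qed.
Lemma neg_le_compat_rev x y : ¬ y ≤ ¬ x -> x ≤ y.
Proof. unfold mv_le; rewrite negK, oplusC; auto. Qed.

Lemma neg_mul x y : ¬ (x ⊙ y) = ¬ x ⊕ ¬ y. Proof. apply negK. Qed.
Lemma neg_oplus x y : ¬ (x ⊕ y) = ¬ x ⊙ ¬ y. Proof. unfold mv_mul; rewrite !negK; auto. Qed.
Lemma mulC x y : x ⊙ y = y ⊙ x. Proof. unfold mv_mul; rewrite oplusC; auto. Qed.
Lemma mulA x y z : x ⊙ (y ⊙ z) = x ⊙ y ⊙ z.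
Proof. unfold mv_mul; rewrite !negK, oplusA; auto. Qed.
Lemma mulACA x y z w : x ⊙ y ⊙ (z ⊙ w) = x ⊙ z ⊙ (y ⊙ w).
Proof. rewrite !mulA. f_equal. rewrite <- !mulA. f_equal. apply mulC. Qed.
Lemma mul1 x : x ⊙ mv_one = x. Proof. unfold mv_mul; rewrite neg_one, oplus0, negK; auto. Qed.
Lemma mul1l x : mv_one ⊙ x = x. Proof. rewrite mulC; apply mul1. Qed.
Lemma mul0 x : x ⊙ mv_zero = mv_zero. Proof. unfold mv_mul; apply neg_inj; rewrite negK; apply oplus1. Qed.
Lemma mulxN x : x ⊙ ¬ x = mv_zero. Proof. unfold mv_mul; rewrite negK, oplusNx; apply neg_one. Qed.

Lemma mul_le_compat_l x y z : y ≤ z -> x ⊙ y ≤ x ⊙ z.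
Proof. intro E. apply neg_le_compat, oplus_le_compat_l, neg_le_compat, E. Qed.
Lemma mul_le_compat x y z w : x ≤ y -> z ≤ w -> x ⊙ z ≤ y ⊙ w.
Proof.
  intros Hxy Hzw. apply mv_le_trans with (x ⊙ w); [now apply mul_le_compat_l|].
  rewrite (mulC x), (mulC y). now apply mul_le_compat_l.
Qed.
Lemma mul_lel x y : x ⊙ y ≤ x.
Proof. apply neg_le_compat_rev. rewrite neg_mul. apply mv_le_oplusr. Qed.
Lemma mul_ler x y : x ⊙ y ≤ y. Proof. rewrite mulC; apply mul_lel. Qed.
Lemma mv_le0_eq x : x ≤ mv_zero -> x = mv_zero.
Proof. intro E. apply mv_le_antisym; auto. apply oplus1l. Qed.

Lemma residuation x y z : x ⊙ y ≤ z <-> x ≤ mv_imp y z.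
Proof. unfold mv_le, mv_imp. rewrite neg_mul, oplusA. tauto. Qed.

Lemma meetE x y : mv_meet x y = y ⊙ (x ⊕ ¬ y).
Proof. unfold mv_meet, mv_join, mv_mul. rewrite !negK, oplusC. reflexivity. Qed.
Lemma mv_meetC x y : mv_meet x y = mv_meet y x.
Proof. unfold mv_meet; rewrite mv_joinC; auto. Qed.
Lemma mv_meet_ler x y : mv_meet x y ≤ y. Proof. rewrite meetE. apply mul_lel. Qed.
Lemma mv_meet_lel x y : mv_meet x y ≤ x. Proof. rewrite mv_meetC. apply mv_meet_ler. Qed.
Lemma mv_meet_le x y : x ≤ y -> mv_meet x y = x.
Proof. intro E. rewrite mv_meetC, meetE. unfold mv_le in E. rewrite oplusC, E. apply mul1. Qed.

Lemma mul_le_meet x y : x ⊙ y ≤ mv_meet x y.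
Proof. rewrite meetE, mulC. apply mul_le_compat_l, mv_le_oplusr. Qed.

Lemma oplus_mul_absorb x y : x ⊕ y ⊕ (x ⊙ y) = x ⊕ y.
Proof.
  assert (Hs : x ⊕ y = mv_meet y (¬ x) ⊕ x).
  { pose proof (mv_join_le _ _ (mv_le_oplusr x y)) as J.
    rewrite mv_joinC in J. unfold mv_join in J.
    rewrite meetE, negK. rewrite <- J at 1. f_equal. unfold mv_mul. rewrite negK, oplusC, (oplusC y x). reflexivity. }
  assert (Hy : y = mv_meet y (¬ x) ⊕ (x ⊙ y)).
  { pose proof (mv_join_le _ _ (mul_lel y x)) as J.
    rewrite mv_joinC in J. unfold mv_join in J.
    rewrite <- J at 1. rewrite (mulC x y). f_equal.
    rewrite mv_meetC, meetE, <- neg_mul, (mulC x y).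
    change (y ⊙ ¬ (y ⊙ x)) with (¬ (¬ y ⊕ ¬ ¬ (y ⊙ x))). now rewrite negK. }
  rewrite Hs at 1. rewrite <- oplusA, (oplusC x), oplusA, <- Hy. apply oplusC.
Qed.

Lemma mul_oplus_absorb x y : x ⊙ y ⊙ (x ⊕ y) = x ⊙ y.
Proof. apply neg_inj. rewrite (neg_mul (x ⊙ y)), neg_mul, neg_oplus. apply oplus_mul_absorb. Qed.

(* [y ⊙ ¬ x = y] says that [x] and [y] are orthogonal. *)
Lemma mul_neg_fixed_sym x y : y ⊙ ¬ x = y -> x ⊙ ¬ y = x.
Proof.
  intro E.
  assert (Hmeet : mv_meet x y = mv_zero).
  { rewrite meetE. replace (x ⊕ ¬ y) with (¬ y); [apply mulxN|].
    rewrite <- E at 1. rewrite neg_mul, negK. apply oplusC. }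
  rewrite mv_meetC, meetE in Hmeet.
  assert (Hle : x ⊙ (y ⊕ ¬ x) ≤ mv_zero) by (rewrite Hmeet; apply mv_le_refl).
  apply residuation in Hle. unfold mv_imp in Hle. rewrite oplus0, neg_oplus, negK in Hle.
  apply mv_le_antisym; [apply mul_lel|]. rewrite mulC; auto.
Qed.

Fixpoint mv_pow x (n : nat) : A :=
  match n with O => mv_one | S k => x ⊙ mv_pow x k end.

Lemma mv_powD x n m : mv_pow x (n + m) = mv_pow x n ⊙ mv_pow x m.
Proof. induction n; simpl; [now rewrite mul1l|]. rewrite IHn, mulA; auto. Qed.
Lemma mv_pow_le_compat x y n : x ≤ y -> mv_pow x n ≤ mv_pow y n.
Proof. intro E. induction n; simpl; [apply mv_le_refl|]. now apply mul_le_compat. Qed.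
Lemma mv_pow_decr x n m : (n <= m)%nat -> mv_pow x m ≤ mv_pow x n.
Proof.
  intro E. replace m with (n + (m - n))%nat by lia. rewrite mv_powD. apply mul_lel.
Qed.
Lemma mul_pow_fixed x y n : x ⊙ y = x -> x ⊙ mv_pow y n = x.
Proof. intro E; induction n; simpl; [apply mul1|]. rewrite mulA, E; auto. Qed.

(* The powers of [x → y] and [y → x] are orthogonal: this is prelinearity. *)
Lemma oplus_pow_imp x y n m :
  mv_pow (mv_imp x y) n ⊕ mv_pow (mv_imp y x) m = mv_one.
Proof.
  set (u := mv_imp x y); set (v := mv_imp y x).
  set (U := mv_pow u n); set (V := mv_pow v m).
  assert (Hvu : ¬ v ⊙ u = ¬ v).
  { unfold u, v, mv_imp. rewrite neg_oplus, negK, (oplusC (¬ x) y). apply mul_oplus_absorb. }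
  assert (HvU : ¬ v ⊙ U = ¬ v) by now apply mul_pow_fixed.
  assert (HUv : ¬ U ⊙ v = ¬ U).
  { rewrite <- (negK v). apply mul_neg_fixed_sym. rewrite negK. exact HvU. }
  assert (HUV : ¬ U ⊙ V = ¬ U) by now apply mul_pow_fixed.
  apply neg_inj. rewrite neg_one, neg_oplus, <- HUV at 1. rewrite <- mulA, mulxN. apply mul0.
Qed.

Lemma imp_trans x y z : mv_imp x y ⊙ mv_imp y z ≤ mv_imp x z.
Proof.
  apply residuation. unfold mv_imp.
  assert (E : ¬ (¬ x ⊕ y) ⊕ (¬ x ⊕ y) ≤ ¬ (¬ x ⊕ y) ⊕ (¬ x ⊕ mv_join y z)).
  { apply oplus_le_compat_l, oplus_le_compat_l, mv_le_joinl. }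
  rewrite oplusNx in E. apply mv_ge1_eq in E.
  unfold mv_le. rewrite <- E. unfold mv_join. f_equal. apply oplusCA.
Qed.

Lemma imp_oplus_compat x y z : mv_imp x y ≤ mv_imp (x ⊕ z) (y ⊕ z).
Proof.
  unfold mv_le, mv_imp.
  assert (E : x ⊕ ¬ x ≤ mv_join x y ⊕ mv_join (¬ x) z).
  { apply oplus_le_compat; apply mv_le_joinl. }
  rewrite oplusxN in E. apply mv_ge1_eq in E. rewrite <- E. unfold mv_join.
  rewrite negK, <- (oplusA _ y). f_equal. apply oplusCA.
Qed.

Lemma imp_le_compat_r x y z : y ≤ z -> mv_imp x y ≤ mv_imp x z.
Proof. apply oplus_le_compat_l. Qed.
Lemma imp_contra x y : mv_imp x y = mv_imp (¬ y) (¬ x).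
Proof. unfold mv_imp. rewrite negK. apply oplusC. Qed.
Lemma imp1l x : mv_imp mv_one x = x. Proof. unfold mv_imp; rewrite neg_one; apply oplus0l. Qed.
Lemma imp0l x : mv_imp mv_zero x = mv_one. Proof. apply oplus1l. Qed.

End MVArithmetic.

Section Filters.
Context {A : MVAlg}.
Variable F : A -> Prop.
Implicit Types x y z : A.

Lemma filter_one : is_filter A F -> F mv_one.
Proof. intros [H _]; exact H. Qed.
Lemma filter_mul x y : is_filter A F -> F x -> F y -> F (x ⊙ y).
Proof. intros [_ [H _]]; auto. Qed.
Lemma filter_le x y : is_filter A F -> F x -> x ≤ y -> F y.
Proof. intros [_ [_ H]]; eauto. Qed.
Lemma filter_pow x n : is_filter A F -> F x -> F (mv_pow x n).
Proof. intros HF Fx; induction n; [now apply filter_one|]. now apply filter_mul. Qed.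

Lemma filter_meet x y : is_filter A F -> F x -> F y -> F (mv_meet x y).
Proof.
  intros HF Fx Fy. apply filter_le with (x ⊙ y); [exact HF|now apply filter_mul|apply mul_le_meet].
Qed.

Lemma filter_imp_trans x y z : is_filter A F ->
  F (mv_imp x y) -> F (mv_imp y z) -> F (mv_imp x z).
Proof.
  intros HF Fxy Fyz. apply filter_le with (mv_imp x y ⊙ mv_imp y z); auto.
  - now apply filter_mul.
  - apply imp_trans.
Qed.

Lemma filter_imp_oplus x y z w : is_filter A F ->
  F (mv_imp x y) -> F (mv_imp z w) -> F (mv_imp (x ⊕ z) (y ⊕ w)).
Proof.
  intros HF Fxy Fzw. apply filter_imp_trans with (y ⊕ z); auto.
  - apply filter_le with (mv_imp x y); auto. apply imp_oplus_compat.
  - rewrite (oplusC y z), (oplusC y w).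
    apply filter_le with (mv_imp z w); auto. apply imp_oplus_compat.
Qed.

(* Otherwise the filter generated by [F] and [x] would be proper. *)
Lemma maximal_filter_notin x : maximal_filter A F -> ~ F x ->
  exists n, F (¬ mv_pow x n).
Proof.
  intros [[HF _] Hmax] Fx.
  set (Fx' := fun w => exists f n, F f /\ f ⊙ mv_pow x n ≤ w).
  assert (HFx' : is_filter A Fx').
  { split; [|split].
    - exists mv_one, O. split; [now apply filter_one|]. simpl. rewrite mul1. apply mv_le_refl.
    - intros y z [f [n [Ff Hy]]] [g [m [Fg Hz]]]. exists (f ⊙ g), (n + m)%nat.
      split; [now apply filter_mul|].
      apply mv_le_trans with ((f ⊙ mv_pow x n) ⊙ (g ⊙ mv_pow x m)); [|now apply mul_le_compat].
      rewrite mv_powD, mulACA. apply mv_le_refl.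
    - intros y z [f [n [Ff Hy]]] Hyz. exists f, n. split; auto. eapply mv_le_trans; eauto. }
  destruct (classic (Fx' mv_zero)) as [[f [n [Ff H0]]]|H0].
  - exists n. apply filter_le with f; auto.
    apply residuation in H0. unfold mv_imp in H0. now rewrite oplus0 in H0.
  - exfalso. apply Fx, (Hmax Fx'); [split; auto| |].
    + intros y Fy. exists y, O. split; auto. simpl. rewrite mul1. apply mv_le_refl.
    + exists mv_one, 1%nat. split; [now apply filter_one|]. simpl. rewrite mul1, mul1l.
      apply mv_le_refl.
Qed.

Lemma maximal_filter_imp_total x y : maximal_filter A F ->
  F (mv_imp x y) \/ F (mv_imp y x).
Proof.
  intros HM. destruct (classic (F (mv_imp x y))) as [Fxy|Fxy]; auto.
  destruct (classic (F (mv_imp y x))) as [Fyx|Fyx]; auto.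
  exfalso. destruct (maximal_filter_notin _ HM Fxy) as [n Hn].
  destruct (maximal_filter_notin _ HM Fyx) as [m Hm].
  destruct HM as [[HF Hproper] _]. apply Hproper.
  assert (Hn' : F (¬ mv_pow (mv_imp x y) (n + m))).
  { apply filter_le with (¬ mv_pow (mv_imp x y) n); auto.
    apply neg_le_compat, mv_pow_decr; lia. }
  assert (Hm' : F (¬ mv_pow (mv_imp y x) (n + m))).
  { apply filter_le with (¬ mv_pow (mv_imp y x) m); auto.
    apply neg_le_compat, mv_pow_decr; lia. }
  pose proof (filter_mul _ _ HF Hn' Hm') as H0.
  now rewrite <- neg_oplus, oplus_pow_imp, neg_one in H0.
Qed.

End Filters.

Section Constants.
Context {A : MVAlg} {c : Q -> A}.
Hypothesis HP : is_pavelka A c.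

Lemma const0 : c 0%Q = mv_zero. Proof. apply HP. Qed.

Lemma const_eq r s : inQ01 r -> inQ01 s -> (r == s)%Q -> c r = c s.
Proof.
  destruct HP as [H0 [Hadd _]]. intros Hr Hs E.
  rewrite <- (oplus0 (c r)), <- H0. apply Hadd; auto.
  - unfold inQ01; lra_Q.
  - rewrite Q.min_l; unfold inQ01 in *; lra_Q.
Qed.

Lemma const1 : c 1%Q = mv_one.
Proof.
  destruct HP as [H0 [_ Hneg]]. rewrite <- (Hneg 0%Q 1%Q); unfold inQ01; try lra_Q.
  now rewrite H0.
Qed.

Lemma const_neg r : inQ01 r -> ¬ c r = c (1 - r)%Q.
Proof. destruct HP as [_ [_ Hneg]]. intros Hr. apply Hneg; unfold inQ01 in *; lra_Q. Qed.

Lemma const_oplus r s : inQ01 r -> inQ01 s -> (r + s <= 1)%Q -> c r ⊕ c s = c (r + s)%Q.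
Proof.
  destruct HP as [_ [Hadd _]]. intros Hr Hs E. apply Hadd; unfold inQ01 in *; try lra_Q.
  rewrite Q.min_l; lra_Q.
Qed.

Lemma const_oplus_sat r s : inQ01 r -> inQ01 s -> (1 <= r + s)%Q -> c r ⊕ c s = mv_one.
Proof.
  intros Hr Hs E. rewrite <- const1. destruct HP as [_ [Hadd _]].
  apply Hadd; unfold inQ01 in *; try lra_Q. rewrite Q.min_r; lra_Q.
Qed.

Lemma const_imp r s : inQ01 r -> inQ01 s -> (s < r)%Q -> mv_imp (c r) (c s) = c (1 - r + s)%Q.
Proof.
  intros Hr Hs E. unfold mv_imp. rewrite const_neg; auto.
  apply const_oplus; unfold inQ01 in *; lra_Q.
Qed.

Lemma const_mul r s : inQ01 r -> inQ01 s -> (1 <= r + s)%Q -> c r ⊙ c s = c (r + s - 1)%Q.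
Proof.
  intros Hr Hs E. unfold mv_mul. rewrite !const_neg, const_oplus, const_neg;
    unfold inQ01 in *; try lra_Q.
  apply const_eq; unfold inQ01 in *; lra_Q.
Qed.

Lemma const_mul_sat r s : inQ01 r -> inQ01 s -> (r + s <= 1)%Q -> c r ⊙ c s = mv_zero.
Proof.
  intros Hr Hs E. unfold mv_mul. rewrite !const_neg, const_oplus_sat; auto using neg_one;
    unfold inQ01 in *; lra_Q.
Qed.

Lemma const_max0_le r : (r <= 0)%Q -> c (Qmax 0 r) = mv_zero.
Proof.
  intros Er. assert (E : (Qmax 0 r == 0)%Q) by (apply Q.max_l; lra_Q).
  rewrite <- const0. apply const_eq; unfold inQ01; rewrite ?E; lra_Q.
Qed.

Lemma const_max0 r : inQ01 r -> c (Qmax 0 r) = c r.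
Proof.
  intros Hr. assert (E : (Qmax 0 r == r)%Q) by (apply Q.max_r, Hr).
  apply const_eq; unfold inQ01 in *; rewrite ?E; auto; lra_Q.
Qed.

Let nQ (k : nat) : Q := inject_Z (Z.of_nat k).

Lemma const_pow q k : inQ01 q ->
  mv_pow (c q) k = c (Qmax 0 (1 - nQ k * (1 - q)))%Q.
Proof.
  intros Hq. induction k as [|k IH].
  - simpl. change (nQ 0) with 0%Q.
    rewrite const_max0, <- const1; [apply const_eq|]; unfold inQ01 in *; lra_Q.
  - simpl mv_pow. rewrite IH.
    assert (Ek : (nQ (S k) == nQ k + 1)%Q).
    { unfold nQ. rewrite Nat2Z.inj_succ, <- Z.add_1_r, inject_Z_plus. reflexivity. }
    assert (Hk0 : (0 <= nQ k)%Q) by (unfold nQ, Qle; simpl; lia).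
    assert (Hke : (0 <= nQ k * (1 - q))%Q) by (apply Qmult_le_0_compat; unfold inQ01 in *; lra_Q).
    destruct Hq as [Hq0 Hq1].
    destruct (Qlt_le_dec 0 (1 - nQ k * (1 - q))) as [Ht|Ht].
    + rewrite const_max0 by (unfold inQ01; lra_Q).
      destruct (Qlt_le_dec (1 - nQ k * (1 - q) + q) 1) as [Hs|Hs].
      * rewrite const_mul_sat, const_max0_le; unfold inQ01; auto; rewrite ?Ek; lra_Q.
      * rewrite const_mul, const_max0; unfold inQ01; rewrite ?Ek; try lra_Q.
        apply const_eq; unfold inQ01; rewrite ?Ek; lra_Q.
    + rewrite const_max0_le, mul0, const_max0_le; auto; rewrite ?Ek; lra_Q.
Qed.

Lemma const_notin_proper (F : A -> Prop) q : proper_filter A F ->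
  inQ01 q -> (q < 1)%Q -> ~ F (c q).
Proof.
  intros [HF Hproper] Hq Hq1 Fq. apply Hproper.
  assert (He : (0 < 1 - q)%Q) by lra_Q.
  destruct (Qarchimedean (/ (1 - q))) as [p Hp].
  assert (Hp' : (1 < inject_Z (Z.pos p) * (1 - q))%Q).
  { apply (Qmult_lt_r _ _ (1 - q) He) in Hp.
    rewrite Qmult_comm, Qmult_inv_r in Hp; [exact Hp|]. intro E; rewrite E in He; discriminate. }
  pose proof (filter_pow F (c q) (Pos.to_nat p) HF Fq) as Fp.
  rewrite const_pow, const_max0_le in Fp; auto. unfold nQ. rewrite positive_nat_Z. lra_Q.
Qed.

End Constants.

Lemma Q2R_dense (a b : R) : (a < b)%R -> exists q : Q, (a < Q2R q < b)%R.
Proof.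
  intro Hab.
  destruct (archimed (/ (b - a))) as [Hn _].
  set (n := up (/ (b - a))) in *.
  assert (Hpos : (0 < / (b - a))%R) by (apply Rinv_0_lt_compat; lra_R).
  assert (Hn0 : (0 < n)%Z) by (apply lt_IZR; lra_R).
  destruct (archimed (a * IZR n)) as [Hm1 Hm2].
  set (m := up (a * IZR n)) in *.
  destruct n as [|p|p]; try lia.
  exists (Qmake m p). unfold Q2R; simpl.
  assert (Hp : (0 < IZR (Z.pos p))%R) by (apply IZR_lt; lia).
  assert (Hgap : (1 < (b - a) * IZR (Z.pos p))%R).
  { apply Rmult_lt_compat_l with (r := (b - a)%R) in Hn; [|lra_R].
    rewrite Rinv_r in Hn; lra_R. }
  split; apply Rmult_lt_reg_r with (IZR (Z.pos p)); auto;
    rewrite Rmult_assoc, Rinv_l; lra_R.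
Qed.

Lemma inQ01_Q2R (q : Q) : inQ01 q <-> (0 <= Q2R q <= 1)%R.
Proof.
  rewrite <- RMicromega.Q2R_0, <- RMicromega.Q2R_1. split.
  - intros [H0 H1]. split; now apply Qle_Rle.
  - intros [H0 H1]. split; now apply Rle_Qle.
Qed.

Lemma Q2R_dense01 (a b : R) : (0 <= a)%R -> (a < b)%R -> (b <= 1)%R ->
  exists q : Q, inQ01 q /\ (a < Q2R q < b)%R.
Proof.
  intros Ha Hab Hb. destruct (Q2R_dense a b Hab) as [q Hq]. exists q.
  split; auto. apply inQ01_Q2R. lra_R.
Qed.

Lemma Q2R_approx_above (a d : R) : (0 <= a <= 1)%R -> (0 < d)%R ->
  exists s, inQ01 s /\ (a <= Q2R s <= a + d)%R.
Proof.
  intros Ha Hd. destruct (Req_dec a 1) as [->|Ha1].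
  - exists 1%Q. split; [unfold inQ01; lra_Q|]. rewrite RMicromega.Q2R_1. lra_R.
  - destruct (Q2R_dense01 a (Rmin 1 (a + d))) as [s [Hs1 Hs2]]; try lra_minmax.
    exists s. split; auto. lra_minmax.
Qed.

Lemma Req_by_Q2R (a b : R) :
  (forall r, inQ01 r -> (Q2R r < a)%R -> (Q2R r <= b)%R) ->
  (forall r, inQ01 r -> (a < Q2R r)%R -> (b <= Q2R r)%R) ->
  (0 <= a <= 1)%R -> (0 <= b <= 1)%R -> a = b.
Proof.
  intros Hbelow Habove Ha Hb.
  destruct (Rtotal_order a b) as [Hab|[Hab|Hab]]; auto.
  - destruct (Q2R_dense01 a b) as [q [Hq1 Hq2]]; try lra_R.
    specialize (Habove q Hq1 (proj1 Hq2)). lra_R.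
  - destruct (Q2R_dense01 b a) as [q [Hq1 Hq2]]; try lra_R.
    specialize (Hbelow q Hq1 (proj2 Hq2)). lra_R.
Qed.

Lemma is_inf_exists (E : R -> Prop) (lb : R) : (exists v, E v) -> (forall v, E v -> lb <= v)%R ->
  exists m, is_inf E m.
Proof.
  intros [v0 Hv0] Hlb.
  set (E' := fun w => E (- w)%R).
  assert (Hb : bound E') by (exists (- lb)%R; intros w Hw; apply Hlb in Hw; lra_R).
  assert (Hn : exists w, E' w) by (exists (- v0)%R; unfold E'; now rewrite Ropp_involutive).
  destruct (completeness E' Hb Hn) as [M [HM1 HM2]].
  exists (- M)%R. split.
  - intros y Hy. assert (E' (- y)%R) by (unfold E'; now rewrite Ropp_involutive).
    apply HM1 in H. lra_R.
  - intros m' Hm'. assert (M <= - m')%R; [|lra_R].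
    apply HM2. intros w Hw. apply Hm' in Hw. lra_R.
Qed.

(** * MV-homomorphisms into the standard MV-algebra *)

Definition std_hom (A : MVAlg) (h : A -> R) : Prop :=
  (forall x, 0 <= h x <= 1)%R /\
  (forall x y, h (x ⊕ y) = std_oplus (h x) (h y)) /\
  (forall x, h (¬ x) = std_neg (h x)) /\
  h mv_zero = 0%R.

Lemma quotient_embedding_std_hom (A : MVAlg) F h : quotient_embedding A F h -> std_hom A h.
Proof. intros [H1 [H2 [H3 [H4 _]]]]. exact (conj H1 (conj H2 (conj H3 H4))). Qed.

Section StdHom.
Context {A : MVAlg}.
Variable h : A -> R.
Hypothesis Hh : std_hom A h.
Implicit Types x y : A.

Lemma std_hom_range x : (0 <= h x <= 1)%R. Proof. apply Hh. Qed.
Lemma std_hom_oplus x y : h (x ⊕ y) = Rmin (h x + h y) 1. Proof. apply Hh. Qed.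
Lemma std_hom_neg x : h (¬ x) = (1 - h x)%R. Proof. apply Hh. Qed.
Lemma std_hom_zero : h mv_zero = 0%R. Proof. apply Hh. Qed.
Lemma std_hom_one : h mv_one = 1%R.
Proof. unfold mv_one. rewrite std_hom_neg, std_hom_zero. lra_R. Qed.

Lemma std_hom_mul x y : h (x ⊙ y) = Rmax 0 (h x + h y - 1).
Proof.
  unfold mv_mul. rewrite std_hom_neg, std_hom_oplus, !std_hom_neg.
  pose proof (std_hom_range x). pose proof (std_hom_range y). lra_minmax.
Qed.

Lemma std_hom_imp x y : h (mv_imp x y) = std_imp (h x) (h y).
Proof.
  unfold mv_imp, std_imp. rewrite std_hom_oplus, std_hom_neg.
  pose proof (std_hom_range x). pose proof (std_hom_range y). lra_minmax.
Qed.

Lemma std_hom_le x y : x ≤ y -> (h x <= h y)%R.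
Proof.
  intros Hxy. assert (E : h (¬ x ⊕ y) = h mv_one) by now rewrite Hxy.
  rewrite std_hom_oplus, std_hom_neg, std_hom_one in E.
  pose proof (std_hom_range x). pose proof (std_hom_range y). lra_minmax.
Qed.

Lemma std_hom_pow1 x n : h x = 1%R -> h (mv_pow x n) = 1%R.
Proof.
  intros Hx. induction n as [|n IH]; simpl; [apply std_hom_one|].
  rewrite std_hom_mul, Hx, IH. lra_minmax.
Qed.

Section Constants.
Context {c : Q -> A}.
Hypothesis HP : is_pavelka A c.

Lemma std_hom_const_multiple (b : positive) (k : nat) : (Z.of_nat k <= Z.pos b)%Z ->
  h (c (inject_Z (Z.of_nat k) * (1 # b))%Q) = Rmin (INR k * h (c (1 # b))) 1.
Proof.
  assert (He : inQ01 (1 # b)) by (unfold inQ01, Qle; simpl; lia).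
  pose proof (std_hom_range (c (1 # b))) as Hu.
  induction k as [|k IH]; intros Hk.
  - rewrite (const_eq HP _ 0%Q), const0, std_hom_zero; auto.
    + simpl. lra_minmax.
    + unfold inQ01, Qle, Qmult; simpl; lia.
    + unfold inQ01; lra_Q.
    + unfold Qeq; simpl; lia.
  - assert (Hk' : inQ01 (inject_Z (Z.of_nat k) * (1 # b))) by (unfold inQ01, Qle, Qmult; simpl; lia).
    rewrite (const_eq HP _ (inject_Z (Z.of_nat k) * (1 # b) + (1 # b))%Q),
      <- const_oplus, std_hom_oplus, IH, S_INR; auto; try lia;
      try (unfold inQ01, Qeq, Qle, Qmult, Qplus; simpl; nia).
    assert (0 <= INR k * h (c (1 # b)))%R by (apply Rmult_le_pos; auto using pos_INR; lra_R).
    lra_minmax.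
Qed.

(* [b] copies of [1/b] add up to [1], while [b - 1] copies give [¬ (1/b)]. *)
Lemma std_hom_const_unit (b : positive) : h (c (1 # b)) = (/ IZR (Z.pos b))%R.
Proof.
  set (u := h (c (1 # b))). set (B := INR (Pos.to_nat b)).
  assert (HB : B = IZR (Z.pos b)) by (unfold B; rewrite INR_IZR_INZ, positive_nat_Z; auto).
  assert (HB1 : (1 <= B)%R) by (rewrite HB; apply IZR_le; lia).
  assert (He : inQ01 (1 # b)) by (unfold inQ01, Qle; simpl; lia).
  assert (Htop : (1 <= B * u)%R).
  { pose proof (std_hom_const_multiple b (Pos.to_nat b) ltac:(lia)) as E.
    rewrite positive_nat_Z in E. rewrite (const_eq HP _ 1%Q), const1, std_hom_one in E; auto.
    - fold u B in E. lra_minmax.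
    - unfold inQ01, Qle, Qmult; simpl; nia.
    - unfold inQ01; lra_Q.
    - unfold Qeq, Qmult; simpl; nia. }
  assert (Hbelow : (Rmin ((B - 1) * u) 1 = 1 - u)%R).
  { pose proof (std_hom_const_multiple b (Pos.to_nat b - 1) ltac:(lia)) as E.
    rewrite (minus_INR _ 1) in E by lia. fold B u in E. simpl INR in E.
    rewrite <- E. unfold u. rewrite <- std_hom_neg, const_neg by auto. f_equal.
    apply (const_eq HP).
    - rewrite Nat2Z.inj_sub, positive_nat_Z by lia.
      unfold inQ01, Qle, Qmult, inject_Z; cbn [Qnum Qden]. rewrite ?Pos.mul_1_l; lia.
    - unfold inQ01 in *; lra_Q.
    - rewrite Nat2Z.inj_sub, positive_nat_Z by lia.
      unfold Qeq, Qminus, Qplus, Qopp, Qmult, inject_Z; cbn [Qnum Qden].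
      rewrite ?Pos.mul_1_l, ?Pos.mul_1_r; lia. }
  assert (Hu : (B * u = 1)%R).
  { replace ((B - 1) * u)%R with (B * u - u)%R in Hbelow by ring.
    unfold Rmin in Hbelow; destruct Rle_dec; try lra_R.
    assert (Hu0 : u = 0%R) by lra_R. rewrite Hu0, Rmult_0_r in *. lra_R. }
  rewrite <- HB. apply Rmult_eq_reg_l with B; [|lra_R]. rewrite Hu, Rinv_r; lra_R.
Qed.

Lemma std_hom_const r : inQ01 r -> h (c r) = Q2R r.
Proof.
  destruct r as [a b]. intros Hr.
  assert (Ha : (0 <= a <= Z.pos b)%Z) by (destruct Hr as [H1 H2]; unfold Qle in *; simpl in *; lia).
  pose proof (std_hom_const_multiple b (Z.to_nat a)) as E. rewrite Z2Nat.id in E by lia.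
  rewrite (const_eq HP _ (inject_Z a * (1 # b))%Q), E, std_hom_const_unit by
    (try lia; unfold inQ01 in *; unfold Qle, Qeq, Qmult in *; simpl in *; nia).
  rewrite INR_IZR_INZ, Z2Nat.id by lia. unfold Q2R; simpl.
  assert (IZR a <= IZR (Z.pos b))%R by (apply IZR_le; lia).
  assert (0 < IZR (Z.pos b))%R by (apply IZR_lt; lia).
  apply Rmin_left. apply Rmult_le_reg_r with (IZR (Z.pos b)); auto.
  rewrite Rmult_assoc, Rinv_l; lra_R.
Qed.

End Constants.
End StdHom.

(** * The value [x/F] of an element at a filter *)

Section QuotientValue.
Context {A : MVAlg}.
Variable c : Q -> A.
Implicit Types (F : A -> Prop) (x y : A).

Definition quot_val_set F x : R -> Prop :=
  fun v => v = 0%R \/ exists r, inQ01 r /\ F (mv_imp (c r) x) /\ v = Q2R r.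

Lemma quot_val_set_bound F x : bound (quot_val_set F x).
Proof. exists 1%R. intros v [->|[r [Hr [_ ->]]]]; [lra_R|]. now apply inQ01_Q2R. Qed.

Lemma quot_val_set_inhabited F x : exists v, quot_val_set F x v.
Proof. exists 0%R; now left. Qed.

(* [x/F = sup {r | r → x ∈ F}]; at a maximal filter this is the image of [x] in [A/F ⊆ [0,1]]. *)
Definition quot_val F x : R :=
  proj1_sig (completeness _ (quot_val_set_bound F x) (quot_val_set_inhabited F x)).

Lemma quot_val_lub F x : is_lub (quot_val_set F x) (quot_val F x).
Proof. unfold quot_val. now destruct completeness. Qed.

Lemma quot_val_range F x : (0 <= quot_val F x <= 1)%R.
Proof.
  destruct (quot_val_lub F x) as [Hub Hleast]. split.
  - apply Hub. now left.
  - apply Hleast. intros v [->|[r [Hr [_ ->]]]]; [lra_R|]. now apply inQ01_Q2R.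
Qed.

Lemma quot_val_ge F x r : inQ01 r -> F (mv_imp (c r) x) -> (Q2R r <= quot_val F x)%R.
Proof. intros Hr Fx. apply (quot_val_lub F x). right. now exists r. Qed.

Hypothesis HP : is_pavelka A c.

Lemma quot_val_filter1 F x : F x -> quot_val F x = 1%R.
Proof.
  intros Fx. apply Rle_antisym; [apply quot_val_range|].
  rewrite <- RMicromega.Q2R_1. apply quot_val_ge; [unfold inQ01; lra_Q|].
  now rewrite (const1 HP), imp1l.
Qed.

Lemma proper_filter_const_imp F r s : proper_filter A F ->
  inQ01 r -> inQ01 s -> F (mv_imp (c r) (c s)) -> (r <= s)%Q.
Proof.
  intros HF Hr Hs Frs. destruct (Qlt_le_dec s r) as [Hlt|Hle]; auto.
  exfalso. rewrite (const_imp HP) in Frs; auto.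
  apply (const_notin_proper HP F (1 - r + s)); auto; unfold inQ01 in *; lra_Q.
Qed.

Lemma quot_val_le F x s : proper_filter A F ->
  inQ01 s -> F (mv_imp x (c s)) -> (quot_val F x <= Q2R s)%R.
Proof.
  intros HF Hs Fx. apply (quot_val_lub F x).
  intros v [->|[r [Hr [Frx ->]]]]; [now apply inQ01_Q2R|].
  apply Qle_Rle, (proper_filter_const_imp F); auto.
  apply filter_imp_trans with x; auto. apply HF.
Qed.

Section Maximal.
Variable F : A -> Prop.
Hypothesis HM : maximal_filter A F.

Let HF : is_filter A F. Proof. apply HM. Qed.

Lemma quot_val_gt_imp x r : inQ01 r -> (Q2R r < quot_val F x)%R -> F (mv_imp (c r) x).
Proof.
  intros Hr Hlt. destruct (maximal_filter_imp_total F (c r) x HM) as [Frx|Fxr]; auto.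
  exfalso. assert (quot_val F x <= Q2R r)%R by (apply quot_val_le; auto; apply HM). lra_R.
Qed.

Lemma quot_val_lt_imp x s : inQ01 s -> (quot_val F x < Q2R s)%R -> F (mv_imp x (c s)).
Proof.
  intros Hs Hlt. destruct (maximal_filter_imp_total F x (c s) HM) as [Fxs|Fsx]; auto.
  exfalso. assert (Q2R s <= quot_val F x)%R by now apply quot_val_ge. lra_R.
Qed.

Lemma quot_val_approx_below x d : (0 < d)%R ->
  exists s, inQ01 s /\ (quot_val F x - d < Q2R s)%R /\ F (mv_imp (c s) x).
Proof.
  intros Hd. pose proof (quot_val_range F x).
  destruct (Rlt_le_dec (quot_val F x - d) 0) as [Hlt|Hle].
  - exists 0%Q. split; [unfold inQ01; lra_Q|]. rewrite RMicromega.Q2R_0, (const0 HP), imp0l.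
    split; [lra_R|]. now apply filter_one.
  - destruct (Q2R_dense01 (quot_val F x - d) (quot_val F x)) as [s [Hs Hsx]]; try lra_R.
    exists s. repeat split; try apply Hs; try lra_R. apply quot_val_gt_imp; auto; lra_R.
Qed.

Lemma quot_val_approx_above x d : (0 < d)%R ->
  exists s, inQ01 s /\ (Q2R s < quot_val F x + d)%R /\ F (mv_imp x (c s)).
Proof.
  intros Hd. pose proof (quot_val_range F x).
  destruct (Rlt_le_dec 1 (quot_val F x + d)) as [Hlt|Hle].
  - exists 1%Q. split; [unfold inQ01; lra_Q|]. rewrite RMicromega.Q2R_1, (const1 HP).
    split; [lra_R|]. unfold mv_imp. rewrite oplus1. now apply filter_one.
  - destruct (Q2R_dense01 (quot_val F x) (quot_val F x + d)) as [s [Hs Hsx]]; try lra_R.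
    exists s. repeat split; try apply Hs; try lra_R. apply quot_val_lt_imp; auto; lra_R.
Qed.

Lemma quot_val_neg x : quot_val F (¬ x) = (1 - quot_val F x)%R.
Proof.
  pose proof (quot_val_range F x). pose proof (quot_val_range F (¬ x)).
  apply Req_by_Q2R; try lra_R.
  - intros r Hr Hlt. pose proof (quot_val_gt_imp _ r Hr Hlt) as Frx.
    rewrite imp_contra, negK, (const_neg HP) in Frx; auto.
    assert (Hr' : inQ01 (1 - r)) by (unfold inQ01 in *; lra_Q).
    pose proof (quot_val_le F _ _ (proj1 HM) Hr' Frx) as E.
    rewrite Q2R_minus, RMicromega.Q2R_1 in E. lra_R.
  - intros r Hr Hlt. pose proof (quot_val_lt_imp _ r Hr Hlt) as Fxr.
    rewrite imp_contra, negK, (const_neg HP) in Fxr; auto.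
    assert (Hr' : inQ01 (1 - r)) by (unfold inQ01 in *; lra_Q).
    pose proof (quot_val_ge F _ _ Hr' Fxr) as E.
    rewrite Q2R_minus, RMicromega.Q2R_1 in E. lra_R.
Qed.

Lemma quot_val_oplus_le x y : (quot_val F (x ⊕ y) <= quot_val F x + quot_val F y)%R.
Proof.
  set (d := ((quot_val F (x ⊕ y) - quot_val F x - quot_val F y) / 3)%R).
  destruct (Rle_lt_dec (quot_val F (x ⊕ y)) (quot_val F x + quot_val F y)) as [Hle|Hlt]; auto.
  exfalso. assert (Hd : (0 < d)%R) by (unfold d; lra_R).
  destruct (quot_val_approx_above x d Hd) as [s [Hs [Hsx Fxs]]].
  destruct (quot_val_approx_above y d Hd) as [t [Ht [Hty Fyt]]].
  pose proof (quot_val_range F (x ⊕ y)).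
  assert (Hst : (s + t <= 1)%Q).
  { apply Rle_Qle. rewrite Q2R_plus, RMicromega.Q2R_1. unfold d in *; lra_R. }
  pose proof (filter_imp_oplus F _ _ _ _ HF Fxs Fyt) as Fst.
  rewrite (const_oplus HP) in Fst; auto.
  apply (quot_val_le F) in Fst; [|apply HM|unfold inQ01 in *; lra_Q].
  rewrite Q2R_plus in Fst. unfold d in *; lra_R.
Qed.

Lemma quot_val_oplus_ge x y : (Rmin (quot_val F x + quot_val F y) 1 <= quot_val F (x ⊕ y))%R.
Proof.
  set (d := ((Rmin (quot_val F x + quot_val F y) 1 - quot_val F (x ⊕ y)) / 3)%R).
  destruct (Rle_lt_dec (Rmin (quot_val F x + quot_val F y) 1) (quot_val F (x ⊕ y)))
    as [Hle|Hlt]; auto.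
  exfalso. assert (Hd : (0 < d)%R) by (unfold d; lra_R).
  destruct (quot_val_approx_below x d Hd) as [s [Hs [Hsx Fsx]]].
  destruct (quot_val_approx_below y d Hd) as [t [Ht [Hty Fty]]].
  pose proof (filter_imp_oplus F _ _ _ _ HF Fsx Fty) as Fst.
  destruct (Qlt_le_dec 1 (s + t)) as [Hst|Hst].
  - rewrite (const_oplus_sat HP), <- (const1 HP) in Fst by (auto; lra_Q).
    apply (quot_val_ge F) in Fst; [|unfold inQ01; lra_Q].
    rewrite RMicromega.Q2R_1 in Fst. unfold d in *; lra_minmax.
  - rewrite (const_oplus HP) in Fst by auto.
    apply (quot_val_ge F) in Fst; [|unfold inQ01 in *; lra_Q].
    rewrite Q2R_plus in Fst. unfold d in *; lra_minmax.
Qed.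

Lemma quot_val_oplus x y : quot_val F (x ⊕ y) = Rmin (quot_val F x + quot_val F y) 1.
Proof.
  pose proof (quot_val_oplus_le x y). pose proof (quot_val_oplus_ge x y).
  pose proof (quot_val_range F (x ⊕ y)). lra_minmax.
Qed.

Lemma quot_val_zero : quot_val F mv_zero = 0%R.
Proof.
  pose proof (quot_val_range F mv_zero).
  assert (quot_val F mv_zero <= Q2R 0)%R.
  { apply quot_val_le; [apply HM|unfold inQ01; lra_Q|]. rewrite imp0l. now apply filter_one. }
  rewrite RMicromega.Q2R_0 in H0. lra_R.
Qed.

Lemma quot_val_std_hom : std_hom A (quot_val F).
Proof.
  repeat split; intros; try apply quot_val_range.
  - apply quot_val_oplus.
  - apply quot_val_neg.
  - apply quot_val_zero.
Qed.

Lemma quot_val_eq1 x : quot_val F x = 1%R <-> F x.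
Proof.
  split; [|apply quot_val_filter1].
  intros Hx. apply NNPP. intros Fx.
  destruct (maximal_filter_notin F x HM Fx) as [n Fn].
  apply quot_val_filter1 in Fn.
  rewrite (std_hom_neg _ quot_val_std_hom), (std_hom_pow1 _ quot_val_std_hom) in Fn; auto. lra_R.
Qed.

Lemma quot_val_quotient_embedding : quotient_embedding A F (quot_val F).
Proof.
  destruct quot_val_std_hom as [H1 [H2 [H3 H4]]].
  split; [|split; [|split; [|split]]]; auto.
  intros x y. unfold filter_cong.
  rewrite <- !quot_val_eq1, !(std_hom_imp _ quot_val_std_hom). unfold std_imp.
  pose proof (quot_val_range F x). pose proof (quot_val_range F y).
  split; [intros ->; split; lra_minmax | intros [E1 E2]; lra_minmax].
Qed.

End Maximal.
End QuotientValue.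

(** * Semisimplicity *)

Section MVHom.
Context {A B : MVAlg}.
Variable f : A -> B.
Hypothesis Hf : mv_hom A B f.

Lemma mv_hom_one : f mv_one = mv_one.
Proof. destruct Hf as [_ [Hneg H0]]. unfold mv_one. now rewrite Hneg, H0. Qed.
Lemma mv_hom_mul x y : f (x ⊙ y) = f x ⊙ f y.
Proof. destruct Hf as [Hoplus [Hneg _]]. unfold mv_mul. now rewrite Hneg, Hoplus, !Hneg. Qed.
Lemma mv_hom_le x y : x ≤ y -> f x ≤ f y.
Proof.
  destruct Hf as [Hoplus [Hneg _]]. unfold mv_le. intros Hxy.
  now rewrite <- Hneg, <- Hoplus, Hxy, mv_hom_one.
Qed.

Lemma mv_hom_kernel_maximal : mv_simple B -> maximal_filter A (fun a => f a = mv_one).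
Proof.
  intros [Hnontriv Hsimple].
  assert (Hker : is_filter A (fun a => f a = mv_one)).
  { split; [|split].
    - apply mv_hom_one.
    - intros a b Ha Hb. now rewrite mv_hom_mul, Ha, Hb, mul1.
    - intros a b Ha Hab. apply mv_ge1_eq. rewrite <- Ha. now apply mv_hom_le. }
  split; [split; auto|].
  - destruct Hf as [_ [_ H0]]. rewrite H0. exact Hnontriv.
  - intros F' [HF' Hproper] Hsub a Fa.
    set (T := fun s : B => exists a, F' a /\ f a ≤ s).
    assert (HT : is_filter B T).
    { split; [|split].
      - exists mv_one. split; [now apply filter_one|]. apply mv_le1.
      - intros s t [a1 [Fa1 H1]] [a2 [Fa2 H2]]. exists (a1 ⊙ a2).
        split; [now apply filter_mul|]. rewrite mv_hom_mul. now apply mul_le_compat.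
      - intros s t [a1 [Fa1 H1]] Hst. exists a1. split; auto. eapply mv_le_trans; eauto. }
    destruct (Hsimple T HT) as [Htriv|Hfull].
    + apply Htriv. exists a. split; auto. apply mv_le_refl.
    + exfalso. destruct (Hfull mv_zero) as [b [Fb Hb]]. apply mv_le0_eq in Hb.
      apply Hproper. rewrite <- (mulxN b). apply filter_mul; auto. apply Hsub.
      destruct Hf as [_ [Hneg _]]. now rewrite Hneg, Hb.
Qed.

End MVHom.

(* Every [x → y ≠ 1] is separated from [1] by a simple factor, whose kernel is maximal. *)
Lemma semisimple_le {A : MVAlg} (c : Q -> A) x y : is_pavelka A c -> mv_semisimple A ->
  (forall F, maximal_filter A F -> (quot_val c F x <= quot_val c F y)%R) -> x ≤ y.
Proof.
  intros HP [I [S [e [Hsimple [Hhom [Hinj _]]]]]] Hle.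
  apply NNPP. intros Hxy.
  assert (Hi : exists i, e (mv_imp x y) i <> mv_one).
  { apply NNPP. intro Hn. apply Hxy. unfold mv_le. apply Hinj.
    apply functional_extensionality_dep. intro i.
    rewrite (mv_hom_one (fun a => e a i)); auto. apply NNPP. intro Hi. apply Hn. now exists i. }
  destruct Hi as [i Hi].
  pose proof (mv_hom_kernel_maximal (fun a => e a i) (Hhom i) (Hsimple i)) as HM.
  apply Hi, (quot_val_eq1 c HP _ HM).
  rewrite (std_hom_imp _ (quot_val_std_hom c HP _ HM)).
  specialize (Hle _ HM). unfold std_imp. lra_minmax.
Qed.

(** * The value of the natural time frame *)

(* The set whose infimum is [R(F, F')] when [h = (_/F)] and [h' = (_/F')]. *)
Definition frame_set {A : MVAlg} (K : A -> A) (h h' : A -> R) : R -> Prop :=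
  fun v => exists a, v = std_imp (h' (K a)) (h a).

Lemma std_imp_range (u v : R) : (0 <= u <= 1)%R -> (0 <= v <= 1)%R ->
  (0 <= std_imp u v <= 1)%R.
Proof. unfold std_imp. lra_minmax. Qed.

Section FrameValue.
Context {A : MVAlg}.
Variables h h' : A -> R.
Hypotheses (Hh : std_hom A h) (Hh' : std_hom A h').

Lemma frame_set_range K v : frame_set K h h' v -> (0 <= v <= 1)%R.
Proof. intros [a ->]. apply std_imp_range; now apply std_hom_range. Qed.

Lemma frame_inf_exists K : exists m, is_inf (frame_set K h h') m.
Proof.
  apply (is_inf_exists _ 0); [now exists (std_imp (h' (K mv_one)) (h mv_one)), mv_one|].
  intros v Hv. now apply (frame_set_range K v).
Qed.

Lemma frame_inf_range K m : is_inf (frame_set K h h') m -> (0 <= m <= 1)%R.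
Proof.
  intros [Hlow Hgreatest]. split.
  - apply Hgreatest. intros v Hv. now apply (frame_set_range K v).
  - apply Rle_trans with (std_imp (h' (K mv_one)) (h mv_one)).
    + apply Hlow. now exists mv_one.
    + apply (frame_set_range K). now exists mv_one.
Qed.

Lemma frame_lower_bound_dual (K1 K2 : A -> A) (s : R) :
  (forall x, ¬ K1 (¬ K2 x) ≤ x) -> (s <= 1)%R ->
  (forall a, s <= std_imp (h' (K1 a)) (h a))%R ->
  (forall b, s <= std_imp (h (K2 b)) (h' b))%R.
Proof.
  intros HK Hs Hlow b. specialize (Hlow (¬ K2 b)). unfold std_imp in *.
  pose proof (std_hom_le h' Hh' _ _ (HK b)) as E.
  rewrite (std_hom_neg h' Hh') in E. rewrite (std_hom_neg h Hh) in Hlow.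
  pose proof (std_hom_range h Hh (K2 b)). pose proof (std_hom_range h' Hh' (K1 (¬ K2 b))).
  lra_minmax.
Qed.

Variable c : Q -> A.
Hypothesis HP : is_pavelka A c.
Variable K : A -> A.
Hypothesis Kc : forall r x, inQ01 r -> mv_imp (c r) (K x) = K (mv_imp (c r) x).
Hypothesis Kmul : forall x y, K x ⊙ K y ≤ K (x ⊙ y).

(* With [b = s → a] for a rational [s] just above [h'(K a)], squaring [b] doubles the gap
   [h'(K a) - h a] until it saturates. *)
Lemma frame_gap_double a eta : (0 < eta)%R ->
  exists b, (Rmin (2 * (h' (K a) - h a)) (1 - 2 * eta) <= h' (K b) - h b)%R.
Proof.
  intros Heta. set (u := h' (K a)). set (v := h a).
  pose proof (std_hom_range h Hh a) as Rv. pose proof (std_hom_range h' Hh' (K a)) as Ru.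
  fold u in Ru. fold v in Rv.
  destruct (Q2R_approx_above u eta) as [s [Hs Hsu]]; auto.
  pose proof (proj1 (inQ01_Q2R s) Hs) as Rs.
  set (b := mv_imp (c s) a). exists (b ⊙ b).
  assert (Hb' : h' (K b) = (1 - Q2R s + u)%R).
  { unfold b. rewrite <- Kc, (std_hom_imp h' Hh'), (std_hom_const h' Hh' HP) by auto.
    fold u. unfold std_imp. lra_minmax. }
  assert (Hb : h b = std_imp (Q2R s) v).
  { unfold b. now rewrite (std_hom_imp h Hh), (std_hom_const h Hh HP). }
  assert (Hsq : (h' (K b ⊙ K b) <= h' (K (b ⊙ b)))%R) by (apply std_hom_le; auto).
  rewrite (std_hom_mul h' Hh'), Hb' in Hsq. rewrite (std_hom_mul h Hh), Hb.
  unfold std_imp. lra_minmax.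
Qed.

Lemma frame_inf_boolean m : is_inf (frame_set K h h') m -> m = 0%R \/ m = 1%R.
Proof.
  intros Hm. pose proof (frame_inf_range K m Hm) as Rm. destruct Hm as [Hlow Hgreatest].
  destruct (Req_dec m 0) as [E0|E0]; auto. destruct (Req_dec m 1) as [E1|E1]; auto.
  exfalso. set (eta := (Rmin (1 - m) m / 8)%R).
  assert (Heta : (0 < eta /\ eta <= (1 - m) / 8 /\ eta <= m / 8)%R) by (unfold eta; lra_minmax).
  destruct (classic (exists a, std_imp (h' (K a)) (h a) < m + eta)%R) as [[a Ha]|Hnone].
  - destruct (frame_gap_double a eta) as [b Hb]; [lra_R|].
    assert (Hmb : (m <= std_imp (h' (K b)) (h b))%R) by (apply Hlow; now exists b).
    unfold std_imp in *. lra_minmax.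
  - assert (m + eta <= m)%R; [|lra_R].
    apply Hgreatest. intros v [a ->]. apply Rnot_lt_le. intros Ha. apply Hnone. now exists a.
Qed.

End FrameValue.

Lemma frame_inf_dual {A : MVAlg} (G H : A -> A) (h h' : A -> R) m m' :
  std_hom A h -> std_hom A h' ->
  (forall x, ¬ H (¬ G x) ≤ x) -> (forall x, ¬ G (¬ H x) ≤ x) ->
  is_inf (frame_set G h h') m -> is_inf (frame_set H h' h) m' -> m = m'.
Proof.
  intros Hh Hh' PTa PTb Hm Hm'.
  pose proof (frame_inf_range h h' Hh Hh' G m Hm) as Rm.
  pose proof (frame_inf_range h' h Hh' Hh H m' Hm') as Rm'.
  destruct Hm as [Hlow Hgreatest]. destruct Hm' as [Hlow' Hgreatest'].
  apply Rle_antisym.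
  - apply Hgreatest'. intros v [b ->].
    apply (frame_lower_bound_dual h h' Hh Hh' G H m PTb); [lra_R|].
    intros a. apply Hlow. now exists a.
  - apply Hgreatest. intros v [a ->].
    apply (frame_lower_bound_dual h' h Hh' Hh H G m' PTa); [lra_R|].
    intros b. apply Hlow'. now exists b.
Qed.

(** * Extension to maximal filters *)

Lemma zorn_chain_union (T : Type) (P : (T -> Prop) -> Prop) :
  (forall C : (T -> Prop) -> Prop, (forall X, C X -> P X) ->
     (forall X Y, C X -> C Y -> (forall t, X t -> Y t) \/ (forall t, Y t -> X t)) ->
     P (fun t => exists X, C X /\ X t)) ->
  exists M, P M /\ forall B, (forall t, M t -> B t) -> P B -> forall t, B t -> M t.
Proof.
  intros Hchain.
  destruct (@classical_sets.Zorn_bigcup T P) as [M [PM Hmax]].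
  - intros C CP Ctot.
    replace (classical_sets.bigcup C (fun X => X)) with (fun t => exists X, C X /\ X t);
      [now apply Hchain|].
    apply boolp.funext; intro t; apply boolp.propext; split.
    + intros [X [CX Xt]]. now exists X.
    + intros [X CX Xt]. now exists X.
  - exists M. split; auto. intros B MB PB t Bt.
    apply NNPP. intros Mt. apply (Hmax B); auto. split; [exact MB|].
    intros BM. now apply Mt, BM.
Qed.

Lemma proper_filter_ext {A : MVAlg} (F F' : A -> Prop) :
  (forall w, F w <-> F' w) -> proper_filter A F -> proper_filter A F'.
Proof.
  intros E [[H1 [H2 H3]] Hproper]. split; [split; [|split]|].
  - now apply E.
  - intros x y Hx Hy. apply E, H2; now apply E.
  - intros x y Hx Hxy. apply E. apply H3 with x; auto. now apply E.
  - intros H0. now apply Hproper, E.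
Qed.

Lemma proper_filter_extend_maximal {A : MVAlg} (F : A -> Prop) : proper_filter A F ->
  exists M, maximal_filter A M /\ forall w, F w -> M w.
Proof.
  intros HF.
  (* Zorn is applied to sets [X] with [X ∪ F] a proper filter, so that the empty chain is harmless. *)
  set (P := fun X : A -> Prop => proper_filter A (fun w => X w \/ F w)).
  destruct (zorn_chain_union A P) as [M0 [PM0 HM0]].
  - intros C CP Ctot. destruct HF as [[F1 [Fmul Fle]] Fproper].
    assert (Hmul : forall x y, (exists X, C X /\ (X x \/ F x) /\ (X y \/ F y)) ->
                 (exists X, C X /\ X (x ⊙ y)) \/ F (x ⊙ y)).
    { intros x y [X [CX [Hx Hy]]]. destruct (CP X CX) as [[_ [HXmul _]] _].
      destruct (HXmul x y Hx Hy); [left; now exists X|now right]. }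
    split; [split; [|split]|].
    + now right.
    + intros x y [[X [CX Xx]]|Fx] [[Y [CY Yy]]|Fy]; try (now right; apply Fmul); apply Hmul.
      * destruct (Ctot X Y CX CY) as [XY|YX]; [exists Y|exists X]; intuition.
      * exists X; tauto.
      * exists Y; tauto.
    + intros x y [[X [CX Xx]]|Fx] Hxy.
      * destruct (CP X CX) as [[_ [_ HXle]] _].
        destruct (HXle x y (or_introl Xx) Hxy); [left; now exists X|now right].
      * right. now apply Fle with x.
    + intros [[X [CX X0]]|F0]; [|exact (Fproper F0)].
      destruct (CP X CX) as [_ Hproper]. apply Hproper. now left.
  - exists (fun w => M0 w \/ F w). split; [split; auto|intros w Fw; now right].
    intros F' HF' Hsub x Fx. left. apply (HM0 F'); [intros t Mt; apply Hsub; now left| |exact Fx].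
    apply proper_filter_ext with F'; auto. intros w. split; [now left|].
    intros [?|?]; auto.
Qed.

(** * Tense operators with a boolean frame *)

(* [R(F, F') > 0] forces [R(F, F') = 1], stated for the embeddings [_/F] and [_/F']. *)
Definition frame_boolean {A : MVAlg} (c : Q -> A) (K : A -> A) : Prop :=
  forall F F', maximal_filter A F -> maximal_filter A F' ->
  forall eps : R, (0 < eps)%R ->
  (forall a, eps <= std_imp (quot_val c F' (K a)) (quot_val c F a))%R ->
  forall a, (quot_val c F' (K a) <= quot_val c F a)%R.

Section TenseOperator.
Context {A : MVAlg} {c : Q -> A}.
Hypotheses (HP : is_pavelka A c) (HS : mv_semisimple A).
Variable K : A -> A.
Hypothesis Kmeet : forall x y, K (mv_meet x y) = mv_meet (K x) (K y).
Hypothesis Kc : forall r x, inQ01 r -> mv_imp (c r) (K x) = K (mv_imp (c r) x).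

Lemma op_one : K mv_one = mv_one.
Proof.
  pose proof (Kc 0%Q mv_one ltac:(unfold inQ01; lra_Q)) as E.
  now rewrite (const0 HP), !imp0l in E.
Qed.

Lemma op_le_compat x y : x ≤ y -> K x ≤ K y.
Proof. intros Hxy. rewrite <- (mv_meet_le _ _ Hxy), Kmeet. apply mv_meet_ler. Qed.

Lemma frame_lower_bound_of_preimage (M F' : A -> Prop) (eps : R) :
  maximal_filter A M -> maximal_filter A F' -> (eps <= 1)%R ->
  (forall b, F' (K b) -> eps <= quot_val c M b)%R ->
  (forall a, eps <= std_imp (quot_val c F' (K a)) (quot_val c M a))%R.
Proof.
  intros HM HM' Heps Hpre a. unfold std_imp.
  pose proof (quot_val_std_hom c HP _ HM) as Hh. pose proof (quot_val_std_hom c HP _ HM') as Hh'.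
  pose proof (quot_val_range c M a). pose proof (quot_val_range c F' (K a)).
  destruct (Rle_lt_dec eps (1 - quot_val c F' (K a) + quot_val c M a)) as [E|E]; [lra_minmax|].
  exfalso.
  destruct (Q2R_dense01 (1 + quot_val c M a - eps) (quot_val c F' (K a))) as [s [Hs Hsa]];
    try lra_R.
  assert (Fb : F' (K (mv_imp (c s) a))).
  { apply (quot_val_eq1 c HP _ HM'). rewrite <- Kc by auto.
    rewrite (std_hom_imp _ Hh'), (std_hom_const _ Hh' HP) by auto.
    unfold std_imp. lra_minmax. }
  apply Hpre in Fb. rewrite (std_hom_imp _ Hh), (std_hom_const _ Hh HP) in Fb by auto.
  unfold std_imp in Fb. lra_minmax.
Qed.

Section Representation.
Variable F' : A -> Prop.
Hypothesis HM' : maximal_filter A F'.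
Variable x : A.
Variable t : Q.
Hypothesis Ht : inQ01 t.

(* The filter generated by [x → t] and all [(x ⊕ (1 - t)) → a] with [K a ∈ F']. *)
Definition rep_filter : A -> Prop := fun w =>
  exists a n, F' (K a) /\
    mv_pow (mv_imp (x ⊕ c (1 - t)%Q) a) n ⊙ mv_pow (mv_imp x (c t)) n ≤ w.

Lemma rep_filter_filter : is_filter A rep_filter.
Proof.
  set (g := fun a => mv_imp (x ⊕ c (1 - t)%Q) a). set (k := mv_imp x (c t)).
  split; [|split].
  - exists mv_one, O. split; [rewrite op_one; apply filter_one, HM'|].
    simpl. rewrite mul1. apply mv_le_refl.
  - intros w1 w2 [a1 [n1 [Fa1 H1]]] [a2 [n2 [Fa2 H2]]].
    exists (mv_meet a1 a2), (n1 + n2)%nat.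
    split; [rewrite Kmeet; apply filter_meet; auto; apply HM'|].
    apply mv_le_trans with ((mv_pow (g a1) n1 ⊙ mv_pow k n1) ⊙ (mv_pow (g a2) n2 ⊙ mv_pow k n2));
      [|now apply mul_le_compat].
    rewrite !mv_powD, mulACA.
    apply mul_le_compat; apply mul_le_compat; try apply mv_le_refl;
      apply mv_pow_le_compat, imp_le_compat_r; [apply mv_meet_lel|apply mv_meet_ler].
  - intros w1 w2 [a [n [Fa H1]]] H2. exists a, n. split; auto. eapply mv_le_trans; eauto.
Qed.

Lemma imp_const_eq : mv_imp (c t) x = x ⊕ c (1 - t)%Q.
Proof. unfold mv_imp. rewrite (const_neg HP) by auto. apply oplusC. Qed.

Lemma rep_filter_proper : (quot_val c F' (K x) < Q2R t)%R -> proper_filter A rep_filter.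
Proof.
  intros Hxt. split; [apply rep_filter_filter|]. intros [a [n [Fa Ha0]]].
  apply mv_le0_eq in Ha0.
  assert (Hax : a ≤ mv_imp (c t) x).
  { rewrite imp_const_eq. apply (semisimple_le c); auto. intros F HF.
    pose proof (quot_val_std_hom c HP F HF) as Hh.
    pose proof (std_hom_range _ Hh a). pose proof (std_hom_range _ Hh x).
    apply Rnot_lt_le. intros Hlt.
    rewrite (std_hom_oplus _ Hh), (std_hom_const _ Hh HP) in Hlt by (unfold inQ01 in *; lra_Q).
    rewrite Q2R_minus, RMicromega.Q2R_1 in Hlt.
    assert (E0 := std_hom_zero _ Hh). rewrite <- Ha0, (std_hom_mul _ Hh), !(std_hom_pow1 _ Hh) in E0;
      [lra_minmax| |]; rewrite (std_hom_imp _ Hh); unfold std_imp.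
    - rewrite (std_hom_const _ Hh HP) by auto. lra_minmax.
    - rewrite (std_hom_oplus _ Hh), (std_hom_const _ Hh HP) by (unfold inQ01 in *; lra_Q).
      rewrite Q2R_minus, RMicromega.Q2R_1. lra_minmax. }
  apply op_le_compat in Hax. rewrite <- Kc in Hax by auto.
  assert (Ft : F' (mv_imp (c t) (K x))) by (apply filter_le with (K a); auto; apply HM').
  apply (quot_val_ge c F') in Ft; auto. lra_R.
Qed.

Lemma rep_filter_maximal_bounds (M : A -> Prop) : maximal_filter A M ->
  (forall w, rep_filter w -> M w) ->
  (forall b, F' (K b) -> 1 - Q2R t <= quot_val c M b)%R /\ (quot_val c M x <= Q2R t)%R.
Proof.
  intros HM Hsub. pose proof (quot_val_std_hom c HP M HM) as Hh. split.
  - intros b Fb.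
    assert (Mb : M (mv_imp (x ⊕ c (1 - t)%Q) b)).
    { apply Hsub. exists b, 1%nat. split; auto. simpl. rewrite !mul1. apply mul_lel. }
    apply (quot_val_eq1 c HP M HM) in Mb.
    rewrite (std_hom_imp _ Hh), (std_hom_oplus _ Hh), (std_hom_const _ Hh HP) in Mb
      by (unfold inQ01 in *; lra_Q).
    rewrite Q2R_minus, RMicromega.Q2R_1 in Mb.
    pose proof (std_hom_range _ Hh x). pose proof (proj1 (inQ01_Q2R t) Ht).
    unfold std_imp in Mb. lra_minmax.
  - apply (quot_val_le c HP M); [apply HM|auto|].
    apply Hsub. exists mv_one, 1%nat. split; [rewrite op_one; apply filter_one, HM'|].
    simpl. rewrite !mul1. apply mul_ler.
Qed.

End Representation.

Lemma frame_boolean_represent (HB : frame_boolean c K) F' x r :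
  maximal_filter A F' -> (quot_val c F' (K x) < r <= 1)%R ->
  exists M, maximal_filter A M /\
    (forall a, quot_val c F' (K a) <= quot_val c M a)%R /\ (quot_val c M x < r)%R.
Proof.
  intros HM' Hr. pose proof (quot_val_range c F' (K x)).
  destruct (Q2R_dense01 (quot_val c F' (K x)) r) as [t [Ht Htr]]; try lra_R.
  destruct (proper_filter_extend_maximal _ (rep_filter_proper F' HM' x t Ht (proj1 Htr)))
    as [M [HM Hsub]].
  destruct (rep_filter_maximal_bounds F' HM' x t Ht M HM Hsub) as [Hlow Hx].
  exists M. split; [exact HM|split; [|lra_R]].
  pose proof (proj1 (inQ01_Q2R t) Ht).
  apply (HB M F' HM HM' (1 - Q2R t)%R); [lra_R|].
  apply frame_lower_bound_of_preimage; auto; lra_R.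
Qed.

Section Operations.
Hypothesis HB : frame_boolean c K.

Lemma frame_boolean_binop_le (op : A -> A -> A) (phi : R -> R -> R) :
  (forall F x y, maximal_filter A F ->
     quot_val c F (op x y) = phi (quot_val c F x) (quot_val c F y)) ->
  (forall u u' v v', u <= u' -> v <= v' -> phi u v <= phi u' v')%R ->
  forall x y, op (K x) (K y) ≤ K (op x y).
Proof.
  intros Hop Hphi x y. apply (semisimple_le c); auto. intros F' HM'.
  apply Rnot_lt_le. intros Hlt.
  pose proof (quot_val_range c F' (op (K x) (K y))).
  rewrite Hop in * by auto.
  destruct (frame_boolean_represent HB F' (op x y)
    ((quot_val c F' (K (op x y)) + phi (quot_val c F' (K x)) (quot_val c F' (K y))) / 2)%R HM')
    as [M [HM [Hdom HMxy]]]; [lra_R|].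
  rewrite Hop in HMxy by auto.
  pose proof (Hphi _ _ _ _ (Hdom x) (Hdom y)). lra_R.
Qed.

Lemma frame_boolean_unop_ge (f : A -> A) (psi : R -> R) :
  (forall F x, maximal_filter A F -> quot_val c F (f x) = psi (quot_val c F x)) ->
  (forall u v, u <= v -> psi u <= psi v)%R ->
  (forall u d, 0 <= d -> psi (u + d) <= psi u + 2 * d)%R ->
  (1 <= psi 1)%R ->
  forall x, K (f x) ≤ f (K x).
Proof.
  intros Hf Hmono Hlip Hone x. apply (semisimple_le c); auto. intros F' HM'.
  rewrite Hf by auto.
  set (u := quot_val c F' (K x)). set (w := quot_val c F' (K (f x))).
  pose proof (quot_val_range c F' (K x)). pose proof (quot_val_range c F' (K (f x))).
  fold u w in H, H0.
  apply Rnot_lt_le. intros Hlt.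
  destruct (Rle_lt_dec 1 u) as [Hu|Hu]; [replace u with 1%R in Hlt by lra_R; lra_R|].
  set (d := Rmin ((w - psi u) / 4) ((1 - u) / 2)).
  assert (Hd : (0 < d /\ d <= (w - psi u) / 4 /\ d <= (1 - u) / 2)%R) by (unfold d; lra_minmax).
  destruct (frame_boolean_represent HB F' x (u + d)%R HM') as [M [HM [Hdom HMx]]]; [fold u; lra_R|].
  pose proof (Hdom (f x)) as Hfx. rewrite Hf in Hfx by auto. fold w in Hfx.
  pose proof (Hmono _ _ (Rlt_le _ _ HMx)). pose proof (Hlip u d). lra_R.
Qed.

End Operations.
End TenseOperator.

Section TenseAxioms.
Context {A : MVAlg} {c : Q -> A}.
Hypotheses (HP : is_pavelka A c) (HS : mv_semisimple A).

Lemma frame_boolean_tense_axioms (K : A -> A) :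
  (forall x y, K (mv_meet x y) = mv_meet (K x) (K y)) ->
  (forall r x, inQ01 r -> mv_imp (c r) (K x) = K (mv_imp (c r) x)) ->
  frame_boolean c K ->
  K mv_one = mv_one /\
  (forall x y, K x ⊙ K y ≤ K (x ⊙ y)) /\ (forall x y, K x ⊕ K y ≤ K (x ⊕ y)) /\
  (forall x, K x ⊙ K x = K (x ⊙ x)) /\ (forall x, K x ⊕ K x = K (x ⊕ x)).
Proof.
  intros Kmeet Kc HB.
  assert (Hmul : forall F x y, maximal_filter A F ->
            quot_val c F (x ⊙ y) = Rmax 0 (quot_val c F x + quot_val c F y - 1)).
  { intros F x y HF. apply (std_hom_mul _ (quot_val_std_hom c HP F HF)). }
  assert (Hoplus : forall F x y, maximal_filter A F ->
            quot_val c F (x ⊕ y) = Rmin (quot_val c F x + quot_val c F y) 1).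
  { intros F x y HF. apply (std_hom_oplus _ (quot_val_std_hom c HP F HF)). }
  assert (Kmul : forall x y, K x ⊙ K y ≤ K (x ⊙ y)).
  { apply (frame_boolean_binop_le HP HS K Kmeet Kc HB mv_mul (fun u v => Rmax 0 (u + v - 1)) Hmul). intros. lra_minmax. }
  assert (Koplus : forall x y, K x ⊕ K y ≤ K (x ⊕ y)).
  { apply (frame_boolean_binop_le HP HS K Kmeet Kc HB mv_oplus (fun u v => Rmin (u + v) 1) Hoplus). intros. lra_minmax. }
  split; [exact (op_one HP K Kc)|]. split; [exact Kmul|]. split; [exact Koplus|].
  split; intros x; apply mv_le_antisym; auto.
  - apply (frame_boolean_unop_ge HP HS K Kmeet Kc HB (fun x => x ⊙ x)
             (fun u => Rmax 0 (u + u - 1))); intros; try apply Hmul; auto; lra_minmax.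
  - apply (frame_boolean_unop_ge HP HS K Kmeet Kc HB (fun x => x ⊕ x)
             (fun u => Rmin (u + u) 1)); intros; try apply Hoplus; auto; lra_minmax.
Qed.

Lemma frame_boolean_of_natural (K : A -> A) :
  natural_frame_boolean A K -> frame_boolean c K.
Proof.
  intros Hnat F F' HF HF' eps Heps Hlow a.
  pose proof (quot_val_quotient_embedding c HP F HF) as QF.
  pose proof (quot_val_quotient_embedding c HP F' HF') as QF'.
  pose proof (quotient_embedding_std_hom A F _ QF) as Hh.
  pose proof (quotient_embedding_std_hom A F' _ QF') as Hh'.
  destruct (frame_inf_exists _ _ Hh Hh' K) as [m Hm].
  destruct (Hnat F F' _ _ HF HF' QF QF' m Hm) as [E|E]; subst m; destruct Hm as [Hlow' Hgreatest].
  - assert (eps <= 0)%R; [|lra_R]. apply Hgreatest. intros v [b ->]. apply Hlow.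
  - assert (H1 : (1 <= std_imp (quot_val c F' (K a)) (quot_val c F a))%R)
      by (apply Hlow'; now exists a).
    pose proof (quot_val_range c F a). pose proof (quot_val_range c F' (K a)).
    unfold std_imp in H1. lra_minmax.
Qed.

Lemma frame_boolean_dual (G H : A -> A) :
  (forall x, ¬ H (¬ G x) ≤ x) -> (forall x, ¬ G (¬ H x) ≤ x) ->
  frame_boolean c G -> frame_boolean c H.
Proof.
  intros PTa PTb HB F F' HF HF' eps Heps Hlow.
  pose proof (quot_val_std_hom c HP F HF) as Hh. pose proof (quot_val_std_hom c HP F' HF') as Hh'.
  assert (Heps1 : (eps <= 1)%R).
  { specialize (Hlow mv_one). unfold std_imp in Hlow. lra_minmax. }
  pose proof (frame_lower_bound_dual _ _ Hh Hh' H G eps PTa Heps1 Hlow) as HlowG.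
  pose proof (HB F' F HF' HF eps Heps HlowG) as HdomG.
  assert (Hfull : forall b, (1 <= std_imp (quot_val c F (G b)) (quot_val c F' b))%R).
  { intros b. specialize (HdomG b). unfold std_imp.
    pose proof (quot_val_range c F (G b)). lra_minmax. }
  intros a. pose proof (frame_lower_bound_dual _ _ Hh' Hh G H 1 PTb (Rle_refl _) Hfull a) as E.
  pose proof (quot_val_range c F a). unfold std_imp in E. lra_minmax.
Qed.

End TenseAxioms.

Lemma natural_frame_boolean_of_submul {A : MVAlg} (c : Q -> A) (K : A -> A) :
  is_pavelka A c ->
  (forall r x, inQ01 r -> mv_imp (c r) (K x) = K (mv_imp (c r) x)) ->
  (forall x y, K x ⊙ K y ≤ K (x ⊙ y)) ->
  natural_frame_boolean A K.
Proof.
  intros HP Kc Kmul F F' h h' _ _ Qh Qh'.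
  apply (frame_inf_boolean h h' (quotient_embedding_std_hom _ _ _ Qh)
           (quotient_embedding_std_hom _ _ _ Qh') c HP K Kc Kmul).
Qed.

Lemma natural_frame_boolean_of_dual_submul {A : MVAlg} (c : Q -> A) (G H : A -> A) :
  is_pavelka A c ->
  (forall r x, inQ01 r -> mv_imp (c r) (H x) = H (mv_imp (c r) x)) ->
  (forall x, ¬ H (¬ G x) ≤ x) -> (forall x, ¬ G (¬ H x) ≤ x) ->
  (forall x y, H x ⊙ H y ≤ H (x ⊙ y)) ->
  natural_frame_boolean A G.
Proof.
  intros HP Hc PTa PTb Hmul F F' h h' _ _ Qh Qh' m Hm.
  pose proof (quotient_embedding_std_hom _ _ _ Qh) as Hh.
  pose proof (quotient_embedding_std_hom _ _ _ Qh') as Hh'.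
  destruct (frame_inf_exists h' h Hh' Hh H) as [m' Hm'].
  rewrite (frame_inf_dual G H h h' m m' Hh Hh' PTa PTb Hm Hm').
  exact (frame_inf_boolean h' h Hh' Hh c HP H Hc Hmul m' Hm').
Qed.

Theorem theorem12 (A : MVAlg) (c : Q -> A) (G H : A -> A)
  (hT : is_tense_pavelka A c G H) (hS : mv_semisimple A) :
  let i := forall x y : A, mv_le (mv_mul (G x) (G y)) (G (mv_mul x y)) in
  let ii := forall x y : A, mv_le (mv_mul (H x) (H y)) (H (mv_mul x y)) in
  let iii := natural_frame_boolean A G in
  let iv := is_tense_mv A G H in
  (i <-> ii) /\ (i <-> iii) /\ (i <-> iv).
Proof.
  intros i ii iii iv.
  destruct hT as [HP [Gmeet [Hmeet [Gc [Hc [PTa PTb]]]]]].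
  assert (i_iii : i -> iii) by exact (natural_frame_boolean_of_submul c G HP Gc).
  assert (ii_iii : ii -> iii) by exact (natural_frame_boolean_of_dual_submul c G H HP Hc PTa PTb).
  assert (iii_iv : iii -> iv).
  { intros Hnat.
    pose proof (frame_boolean_of_natural HP G Hnat) as HBG.
    pose proof (frame_boolean_dual HP G H PTa PTb HBG) as HBH.
    destruct (frame_boolean_tense_axioms HP hS G Gmeet Gc HBG) as [G1 [G2 [G3 [G4 G5]]]].
    destruct (frame_boolean_tense_axioms HP hS H Hmeet Hc HBH) as [H1 [H2 [H3 [H4 H5]]]].
    repeat split; auto. }
  assert (iv_i : iv -> i) by (intros [_ [T2 _]] x y; apply T2).
  assert (iv_ii : iv -> ii) by (intros [_ [T2 _]] x y; apply T2).
  tauto.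
Qed.
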